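(* Let $R$ be a $p$-torsion free perfectoid ring containing a compatible system $(p^{1/p^e})_{e\ge0}$ of $p$-power roots of $p$, and let $n\ge1$. Put $i_m=\frac1p+\cdots+\frac1{p^m}$ for $m\ge1$ and $i_0=0$. Then there exist an $\overline R$-linear map $\overline\psi_n:Q_{R,n}\to R/p^{i_n}R$ and a unit $w\in R/pR$ such that $\overline\psi_n(1)=1$ and $\overline\psi_n(V^{n-1}[a])=w\,p^{i_{n-1}}F^{-n}(a)$ for every $a\in R$.
   Context: For $\alpha=k/p^e\in\mathbb{Z}[1/p]_{\ge 0}$, $p^\alpha:=(p^{1/p^e})^k$. $\overline R=R/pR$. $W_n$: $p$-typical Witt vectors of length $n$, $[\cdot]$ Teichmüller, $V$ Verschiebung. $\Phi_{R,n}:\overline R\to W_n(R)/pW_n(R)$, $a\mapsto[\tilde a^p]$ ($\tilde a$ a lift) is a well-defined ring map, and $Q_{R,n}$ is $W_n(R)/pW_n(R)$ viewed as an $\overline R$-module via $\Phi_{R,n}$. Here $V^{n-1}[a]$ denotes the class in $Q_{R,n}$ of $V^{n-1}([a])$. For a perfectoid $R$ the $p^n$-th power map induces an isomorphism $R/p^{1/p^n}R\xrightarrow{\sim}R/pR$; $F^{-n}(a)\in R/p^{1/p^n}R$ denotes the preimage of the class of $a$, and $p^{i_{n-1}}F^{-n}(a)$ is regarded as an element of $R/p^{i_n}R$ (well defined since $i_{n-1}+p^{-n}=i_n$). *)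

From HB Require Import structures.
From mathcomp Require Import all_boot all_algebra.
Set Implicit Arguments.
Unset Strict Implicit.
Unset Printing Implicit Defensive.
Import GRing.Theory.
Local Open Scope ring_scope.

(* Conventions: R is a commutative ring (possibly zero), p : nat a prime,
   p%:R its image in R.  Elements of R/mR are represented by elements of R
   and equalities in R/mR by the congruences below. *)

Section Defs.
Variable R : comPzRingType.

Definition rdvd (a b : R) : Prop := exists c, b = a * c.

Definition cong (m x y : R) : Prop := rdvd m (x - y).

Definition ptorsion_free (p : nat) : Prop :=
  forall x : R, p%:R * x = 0 -> x = 0.

Definition padically_complete (p : nat) : Prop :=
  (forall x : R, (forall k, rdvd (p%:R ^+ k) x) -> x = 0) /\
  (forall x : nat -> R, (forall k, rdvd (p%:R ^+ k) (x k.+1 - x k)) ->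
     exists y : R, forall k, rdvd (p%:R ^+ k) (y - x k)).

Definition compatible_roots (p : nat) (pi : nat -> R) : Prop :=
  pi 0%N = p%:R /\ forall e, pi e.+1 ^+ p = pi e.

(* Perfectoidness of a p-torsion free ring R with pi 1 = p^{1/p}
   (so (pi 1)^p = p): R is (pi 1)-adically = p-adically complete and the
   Frobenius R/p^{1/p} R -> R/pR is bijective (BMS1, Lemma 3.10). *)
Definition perfectoid_tf (p : nat) (pi : nat -> R) : Prop :=
  padically_complete p /\
  (forall a : R, exists b : R, cong p%:R (b ^+ p) a) /\
  (forall b : R, rdvd p%:R (b ^+ p) -> rdvd (pi 1%N) b).

(* p^{i_m} with i_m = 1/p + ... + 1/p^m = (sum_{k<m} p^k)/p^m *)
Definition p_i (p : nat) (pi : nat -> R) (m : nat) : R :=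
  pi m ^+ (\sum_(k < m) p ^ k)%N.

Definition unit_mod (p : nat) (w : R) : Prop :=
  exists u : R, cong p%:R (w * u) 1.

Definition ghost (p n : nat) (x : 'I_n -> R) (i : 'I_n) : R :=
  \sum_(j < n | (j <= i)%N) p%:R ^+ j * x j ^+ (p ^ (i - j)).

Definition teich (n : nat) (a : R) (i : 'I_n) : R := if nat_of_ord i == 0%N then a else 0.

(* V^{n-1}([a]) = (0, ..., 0, a) *)
Definition verschV (n : nat) (a : R) (i : 'I_n) : R := if nat_of_ord i == n.-1 then a else 0.


(* An R̄-linear map Q_{R,n} -> R/mR, given by a lift
   f : W_n(R) -> R.  Since R is p-torsion free the ghost map is injective
   and a ring homomorphism for the Witt ring structure, so z = x + y in
   W_n(R) iff ghost z = ghost x + ghost y, etc.  The conditions say that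
   f is additive mod m, kills p W_n(R) (hence factors through
   Q_{R,n} = W_n(R)/pW_n(R)), and is linear for the R̄-module structure
   Phi_{R,n}(a) = [a~^p]. *)
Definition Qlinear (p n : nat) (m : R) (f : ('I_n -> R) -> R) : Prop :=
  (forall x y z : 'I_n -> R,
     (forall i, ghost p z i = ghost p x i + ghost p y i) ->
     cong m (f z) (f x + f y)) /\
  (forall x z : 'I_n -> R,
     (forall i, ghost p z i = p%:R * ghost p x i) -> cong m (f z) 0) /\
  (forall (a : R) (x z : 'I_n -> R),
     (forall i, ghost p z i = ghost p (@teich n (a ^+ p)) i * ghost p x i) ->
     cong m (f z) (a * f x)).

End Defs.

Arguments teich {R} n a i.
Arguments verschV {R} n a i.
Arguments ghost {R} p {n} x i.

(* Since R is p-torsion free, Witt vectors are handled through their ghost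
   components; that sums of ghost vectors are ghost vectors is Dwork's lemma over
   Z[X] with the Frobenius lift X_i |-> X_i^p, evaluated in R.  Modulo p every
   Witt vector is a combination sum_j t_j . V^j(1) for the R/p-module structure,
   by a p-adic digit expansion using surjectivity of Frobenius on R/p and the
   vector kappa with V kappa = p - [p].  So psi is sought in the form
   psi(sum_j t_j V^j(1)) = sum_j w_j p^(i_j) t_j, and the units w_j are chosen by
   induction on n so that psi kills every relation: a relation of length n + 1
   forces t_0 = p^(1/p) tau and gives a relation of length n between the
   t_(j+1)^p and kappa; with w_(j+1)^p = - c w_j mod p, c an inverse of psi(kappa),
   the element (tau + sum_j w_(j+1) p^(i_j/p) t_(j+1))^p is divisible by p^(i_n),
   and injectivity of Frobenius gives divisibility of psi by p^(i_(n+1)). *)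

From HB Require Import structures.
From mathcomp Require Import all_boot all_algebra.
From mathcomp Require Import mpoly ring zify.
From Stdlib Require Import IndefiniteDescription.
Set Implicit Arguments.
Unset Strict Implicit.
Unset Printing Implicit Defensive.
Import GRing.Theory Num.Theory.
Local Open Scope ring_scope.

Section Divisibility.
Variable A : comPzRingType.
Implicit Types a b c d m : A.

Lemma rdvd_refl a : rdvd a a. Proof. by exists 1; rewrite mulr1. Qed.
Lemma rdvd0 a : rdvd a 0. Proof. by exists 0; rewrite mulr0. Qed.

Lemma rdvdD a b c : rdvd a b -> rdvd a c -> rdvd a (b + c).
Proof. by move=> [x ->] [y ->]; exists (x + y); rewrite mulrDr. Qed.

Lemma rdvdN a b : rdvd a b -> rdvd a (- b).
Proof. by move=> [x ->]; exists (- x); rewrite mulrN. Qed.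

Lemma rdvdB a b c : rdvd a b -> rdvd a c -> rdvd a (b - c).
Proof. by move=> ab ac; apply/rdvdD/rdvdN. Qed.

Lemma rdvdMl a b c : rdvd a b -> rdvd a (c * b).
Proof. by move=> [x ->]; exists (c * x); rewrite mulrCA. Qed.

Lemma rdvdMr a b c : rdvd a b -> rdvd a (b * c).
Proof. by rewrite mulrC; apply: rdvdMl. Qed.

Lemma rdvd_trans a b c : rdvd a b -> rdvd b c -> rdvd a c.
Proof. by move=> [x ->] [y ->]; exists (x * y); rewrite mulrA. Qed.

Lemma rdvd_mul a b c d : rdvd a b -> rdvd c d -> rdvd (a * c) (b * d).
Proof. by move=> [x ->] [y ->]; exists (x * y); rewrite mulrACA. Qed.

Lemma rdvd_sum a k (F : 'I_k -> A) : (forall i, rdvd a (F i)) -> rdvd a (\sum_(i < k) F i).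
Proof. by move=> aF; elim/big_ind: _ => //; [exact: rdvd0 | exact: rdvdD]. Qed.

Lemma rdvd_exp2l a k l : (k <= l)%N -> rdvd (a ^+ k) (a ^+ l).
Proof. by move=> kl; exists (a ^+ (l - k)); rewrite -exprD subnKC. Qed.

Lemma cong_refl m a : cong m a a.
Proof. by rewrite /cong subrr; apply: rdvd0. Qed.

Lemma cong_eq m a b : a = b -> cong m a b.
Proof. by move=> ->; apply: cong_refl. Qed.

Lemma cong_sym m a b : cong m a b -> cong m b a.
Proof. by move=> ab; rewrite /cong -opprB; apply: rdvdN. Qed.

Lemma cong_trans m a b c : cong m a b -> cong m b c -> cong m a c.
Proof. by move=> ab bc; rewrite /cong -[a](subrK b) -addrA; apply: rdvdD. Qed.

Lemma congD m a b c d : cong m a b -> cong m c d -> cong m (a + c) (b + d).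
Proof. by move=> ab cd; rewrite /cong opprD addrACA; apply: rdvdD. Qed.

Lemma congN m a b : cong m a b -> cong m (- a) (- b).
Proof. by move=> ab; rewrite /cong -opprD; apply: rdvdN. Qed.

Lemma congB m a b c d : cong m a b -> cong m c d -> cong m (a - c) (b - d).
Proof. by move=> ab cd; apply/congD/congN. Qed.

Lemma congM m a b c d : cong m a b -> cong m c d -> cong m (a * c) (b * d).
Proof.
rewrite /cong => ab cd; have -> : a * c - b * d = a * (c - d) + (a - b) * d by ring.
by apply: rdvdD; [apply: rdvdMl | apply: rdvdMr].
Qed.

Lemma congX m a b k : cong m a b -> cong m (a ^+ k) (b ^+ k).
Proof.
by move=> ab; elim: k => [|k IH]; rewrite ?expr0 ?exprS; [apply: cong_refl | apply: congM].
Qed.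

Lemma cong_sum m k (F G : 'I_k -> A) : (forall i, cong m (F i) (G i)) ->
  cong m (\sum_(i < k) F i) (\sum_(i < k) G i).
Proof. by move=> FG; rewrite /cong -sumrB; apply: rdvd_sum. Qed.

Lemma cong_dvd m m' a b : rdvd m m' -> cong m' a b -> cong m a b.
Proof. exact: rdvd_trans. Qed.

Lemma rdvd_cong m a b : cong m a b -> rdvd m b -> rdvd m a.
Proof. by move=> ab mb; rewrite -(subrK b a); apply: rdvdD. Qed.

End Divisibility.

Lemma cong_rmorph (A B : comPzRingType) (f : {rmorphism A -> B}) m a b :
  cong m a b -> cong (f m) (f a) (f b).
Proof. by move=> [c e]; exists (f c); rewrite -rmorphB e rmorphM. Qed.

Lemma cong_mulmod (A : comPzRingType) (m a b c : A) :
  cong m a b -> cong (c * m) (c * a) (c * b).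
Proof. by move=> [x e]; exists x; rewrite -mulrBr e mulrA. Qed.

Section Frobenius.
Variables (A : comPzRingType) (p : nat).
Hypothesis pP : prime p.
Local Notation P := (p%:R : A).
Implicit Types a b : A.

Lemma exprD_prime a b : exists c, (a + b) ^+ p = a ^+ p + b ^+ p + P * b * c.
Proof.
case: p pP => [|[|q]] // pP'.
rewrite exprDn big_ord_recr big_ord_recl /= subn0 subnn bin0 binn !expr0 mulr1 mul1r !mulr1n.
exists (\sum_(i < q.+1) a ^+ (q.+2 - bump 0 i) * b ^+ i *+ ('C(q.+2, bump 0 i) %/ q.+2)).
rewrite addrAC; congr (_ + _); rewrite mulr_sumr; apply: eq_bigr => i _ /=.
have pC : (q.+2 %| 'C(q.+2, bump 0 i))%N.
  by apply: prime_dvd_bin => //; rewrite /bump /= add1n ltnS; case: i => /= i; rewrite ltnS.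
rewrite -{1}(divnK pC) mulnC mulrnA -mulr_natl exprS; ring.
Qed.

Lemma cong_frobD a b : cong P ((a + b) ^+ p) (a ^+ p + b ^+ p).
Proof. by have [c ->] := exprD_prime a b; exists (b * c); ring. Qed.

Lemma cong_frob_sum k (F : 'I_k -> A) :
  cong P ((\sum_(i < k) F i) ^+ p) (\sum_(i < k) F i ^+ p).
Proof.
elim: k F => [|k IH] F; first by rewrite !big_ord0 expr0n gtn_eqF ?prime_gt0 //; apply: cong_refl.
by rewrite !big_ord_recr; apply: cong_trans (cong_frobD _ _) (congD (IH _) (cong_refl _ _)).
Qed.

Lemma cong_frobN a : cong P ((- a) ^+ p) (- a ^+ p).
Proof.
have := cong_frobD a (- a); rewrite subrr expr0n gtn_eqF ?prime_gt0 //.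
move=> /cong_sym/congB/(_ (cong_refl P (a ^+ p))).
by rewrite addrC addKr sub0r.
Qed.

Lemma cong_frob_nat n : cong P ((n%:R : A) ^+ p) n%:R.
Proof.
elim: n => [|n IH]; first by rewrite expr0n gtn_eqF ?prime_gt0 //; apply: cong_refl.
rewrite mulrSr; apply: cong_trans (cong_frobD _ _) (congD IH _).
by rewrite expr1n; apply: cong_refl.
Qed.

Lemma cong_frobDX N a b : cong P ((a + b) ^+ (p ^ N)) (a ^+ (p ^ N) + b ^+ (p ^ N)).
Proof.
elim: N => [|N IH]; first by rewrite !expn0 !expr1; apply: cong_refl.
by rewrite expnSr !exprM; apply: cong_trans (congX _ IH) (cong_frobD _ _).
Qed.

Lemma cong_expp k a b : (1 <= k)%N -> cong (P ^+ k) a b -> cong (P ^+ k.+1) (a ^+ p) (b ^+ p).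
Proof.
move=> k1 [c abc]; have -> : a = b + P ^+ k * c by rewrite -abc addrC subrK.
have [d ->] := exprD_prime b (P ^+ k * c); rewrite /cong.
have -> : b ^+ p + (P ^+ k * c) ^+ p + P * (P ^+ k * c) * d - b ^+ p =
  (P ^+ k * c) ^+ p + P ^+ k.+1 * (c * d) by rewrite exprS; ring.
apply: rdvdD; last by exists (c * d).
rewrite exprMn -exprM; apply/rdvdMr/rdvd_exp2l; have := prime_gt1 pP; nia.
Qed.

Lemma cong_exppn k r a b : (1 <= k)%N -> cong (P ^+ k) a b ->
  cong (P ^+ (k + r)) (a ^+ (p ^ r)) (b ^+ (p ^ r)).
Proof.
move=> k1 ab; elim: r => [|r IH]; first by rewrite addn0 !expn0 !expr1.
by rewrite addnS expnS mulnC !exprM; apply: cong_expp; first exact: leq_trans (leq_addr _ _).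
Qed.

End Frobenius.

Lemma cong_frob_int p (c : int) : prime p -> cong p%:R (c ^+ p) c.
Proof.
move=> pP; case: c => n; first by have := cong_frob_nat int pP n; rewrite !natz.
rewrite NegzE; apply: cong_trans (cong_frobN pP _) _; apply: congN.
by have := cong_frob_nat int pP n.+1; rewrite !natz.
Qed.

Lemma big_ord_single (A : nmodType) i k (F : nat -> A) :
  (forall j, j != k -> F j = 0) -> \sum_(j < i.+1) F j = if (k <= i)%N then F k else 0.
Proof.
move=> F0; case: ifP => ki.
  rewrite (bigD1 (Ordinal (ki : (k < i.+1)%N))) //= big1 ?addr0 // => j jk.
  by apply: F0; apply: contra jk => /eqP jk; apply/eqP/val_inj.
by rewrite big1 // => j _; apply: F0; apply: contraFneq ki => <-; rewrite -ltnS.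
Qed.

Definition ghostn (A : comPzRingType) (p : nat) (x : nat -> A) (i : nat) : A :=
  \sum_(j < i.+1) p%:R ^+ j * x j ^+ (p ^ (i - j)).

Lemma ghostn_rmorph (A B : comPzRingType) (f : {rmorphism A -> B}) p (x : nat -> A) i :
  f (ghostn p x i) = ghostn p (fun j => f (x j)) i.
Proof.
by rewrite rmorph_sum; apply: eq_bigr => j _; rewrite rmorphM rmorphXn rmorph_nat rmorphXn.
Qed.

Lemma ghost_ghostn (A : comPzRingType) p n (x : 'I_n.+1 -> A) (i : 'I_n.+1) :
  ghost p x i = ghostn p (fun j => x (inord j)) i.
Proof.
rewrite /ghost /ghostn (big_ord_widen n.+1 (fun j => p%:R ^+ j * x (inord j) ^+ (p ^ (i - j)))) //.
by apply: eq_bigr => j _; rewrite inord_val.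
Qed.

Lemma ghostn_inord (A : comPzRingType) p n (x : 'I_n.+1 -> A) i : (i < n.+1)%N ->
  ghostn p (fun j => x (inord j)) i = ghost p x (inord i).
Proof. by move=> im; rewrite ghost_ghostn inordK. Qed.

Lemma eq_ghostn (A : comPzRingType) p (x y : nat -> A) i :
  (forall j, (j <= i)%N -> x j = y j) -> ghostn p x i = ghostn p y i.
Proof. by move=> xy; apply: eq_bigr => j _; rewrite xy // -ltnS. Qed.

Lemma ghostnS (A : comPzRingType) (phi : {rmorphism A -> A}) p (x : nat -> A) :
  (forall j, phi (x j) = x j ^+ p) ->
  forall i, ghostn p x i.+1 = phi (ghostn p x i) + p%:R ^+ i.+1 * x i.+1.
Proof.
move=> phix i; rewrite ghostn_rmorph /ghostn big_ord_recr /= subnn expn0 expr1.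
by congr (_ + _); apply: eq_bigr => j _; rewrite phix -exprM -expnS subSn // -ltnS.
Qed.

Section Dwork.
Variables (A : comPzRingType) (p : nat) (phi : {rmorphism A -> A}).
Hypothesis pP : prime p.
Hypothesis phi_frob : forall a, cong p%:R (phi a) (a ^+ p).

Lemma cong_ghostn_frob (x : nat -> A) k :
  cong (p%:R ^+ k.+1) (phi (ghostn p x k)) (\sum_(j < k.+1) p%:R ^+ j * x j ^+ (p ^ (k.+1 - j))).
Proof.
rewrite ghostn_rmorph; apply: cong_sum => j.
have jk : (j <= k)%N by rewrite -ltnS.
have e : k.+1 = (j + (1 + (k - j)))%N by lia.
rewrite {1}e exprD subSn // expnS exprM.
by apply: cong_mulmod; apply: cong_exppn => //; rewrite expr1.
Qed.

Lemma dwork (H : nat -> A) : (forall i, cong (p%:R ^+ i.+1) (H i.+1) (phi (H i))) ->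
  forall m, exists x, forall i, (i < m)%N -> ghostn p x i = H i.
Proof.
move=> HS; elim=> [|[|k] [x xH]]; first by exists (fun _ => 0).
  exists (fun _ => H 0%N) => i; rewrite ltnS leqn0 => /eqP ->.
  by rewrite /ghostn big_ord1 /= expr0 mul1r expn0 expr1.
have [c Hc] : cong (p%:R ^+ k.+1) (H k.+1)
    (\sum_(j < k.+1) p%:R ^+ j * x j ^+ (p ^ (k.+1 - j))).
  by apply: cong_trans (HS k) _; rewrite -xH //; apply: cong_ghostn_frob.
exists (fun j => if j == k.+1 then c else x j) => i.
rewrite ltnS leq_eqVlt => /orP [/eqP ->|ik]; last first.
  by rewrite -xH //; apply: eq_ghostn => j ji; rewrite ifN // neq_ltn (leq_ltn_trans ji).
move: Hc; set s := \sum_(j < _) _ => Hc; rewrite -[H k.+1](subrK s) Hc addrC.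
rewrite /ghostn big_ord_recr /= eqxx subnn expn0 expr1.
by congr (_ + _); apply: eq_bigr => j _; rewrite ltn_eqF.
Qed.

End Dwork.

Section FrobeniusLift.
Variables (p k : nat).
Hypothesis pP : prime p.

Definition frobX : {rmorphism {mpoly int[k]} -> {mpoly int[k]}} :=
  comp_mpoly [tuple ('X_i : {mpoly int[k]}) ^+ p | i < k].

Lemma frobX_X i : frobX 'X_i = 'X_i ^+ p.
Proof. by rewrite /frobX /= comp_mpolyXU -tnth_nth tnth_mktuple. Qed.

Lemma cong_frobX (q : {mpoly int[k]}) : cong p%:R (frobX q) (q ^+ p).
Proof.
elim/mpolyind: q => [|c m q _ _ IH].
  by rewrite rmorph0 expr0n gtn_eqF ?prime_gt0 //; apply: cong_refl.
rewrite rmorphD; apply: cong_trans (cong_sym (cong_frobD pP _ _)); apply: congD => //.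
rewrite -mul_mpolyC mpolyXE_id rmorphM /= comp_mpolyC rmorph_prod exprMn.
apply: congM.
  have := cong_rmorph (@mpolyC k int) (cong_frob_int c pP).
  by rewrite rmorph_nat rmorphXn => /cong_sym.
rewrite -prodrXl; apply: cong_eq; apply: eq_bigr => i _.
by rewrite rmorphXn /= comp_mpolyXU -tnth_nth tnth_mktuple exprAC.
Qed.

Lemma frobX_ghostnS (f : nat -> 'I_k) i :
  ghostn p (fun j => 'X_(f j)) i.+1 =
  frobX (ghostn p (fun j => 'X_(f j)) i) + p%:R ^+ i.+1 * 'X_(f i.+1).
Proof. by apply: ghostnS => j; apply: frobX_X. Qed.

End FrobeniusLift.

Definition is_ghost (S : comNzRingType) p m (g : nat -> S) :=
  exists x, forall i, (i < m)%N -> ghostn p x i = g i.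

Section GhostVectors.
Variables (S : comNzRingType) (p : nat).
Hypothesis pP : prime p.
Local Notation P := (p%:R : S).
Local Notation is_ghost := (is_ghost p).
Implicit Types (m : nat) (c : S) (g h : nat -> S).

Definition verschg g i : S := if i is i'.+1 then P * g i' else 0.

Lemma expr0pn n : (0 : S) ^+ (p ^ n) = 0.
Proof. by rewrite expr0n expn_eq0 gtn_eqF ?(prime_gt0 pP). Qed.

Lemma ghostn_single k c i : ghostn p (fun j => if j == k then c else 0) i =
  if (k <= i)%N then P ^+ k * c ^+ (p ^ (i - k)) else 0.
Proof.
rewrite /ghostn
  (@big_ord_single _ i k (fun j => P ^+ j * (if j == k then c else 0) ^+ (p ^ (i - j)))).
  by rewrite eqxx.
by move=> j /negbTE ->; rewrite expr0pn mulr0.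
Qed.

Lemma eq_is_ghost m g h : (forall i, (i < m)%N -> g i = h i) -> is_ghost m g -> is_ghost m h.
Proof. by move=> gh [x xg]; exists x => i im; rewrite xg // gh. Qed.

Lemma is_ghost0 m : is_ghost m (fun _ => 0 : S).
Proof. by exists (fun _ => 0) => i _; rewrite /ghostn big1 // => j _; rewrite expr0pn mulr0. Qed.

Lemma is_ghost_teich m c : is_ghost m (fun i => c ^+ (p ^ i)).
Proof.
by exists (fun j => if j == 0%N then c else 0) => i _; rewrite ghostn_single subn0 expr0 mul1r.
Qed.

Lemma ghostn_teich n c i : (i < n.+1)%N ->
  ghostn p (fun j => teich n.+1 c (inord j)) i = c ^+ (p ^ i).
Proof.
move=> im; rewrite (@eq_ghostn _ _ _ (fun j => if j == 0%N then c else 0)).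
  by rewrite ghostn_single subn0 expr0 mul1r.
by move=> j ji; rewrite /teich inordK // (leq_ltn_trans ji).
Qed.

Lemma ghostn_versch n c i : (i < n.+1)%N ->
  ghostn p (fun j => verschV n.+1 c (inord j)) i = if i == n then P ^+ n * c else 0.
Proof.
move=> im; rewrite (@eq_ghostn _ _ _ (fun j => if j == n then c else 0)).
  rewrite ghostn_single; have [-> | ni] := eqVneq i n; first by rewrite leqnn subnn expr1.
  by rewrite leqNgt ltn_neqAle ni -ltnS im.
by move=> j ji; rewrite /verschV inordK // (leq_ltn_trans ji).
Qed.

Lemma is_ghost_multeich m c g : is_ghost m g -> is_ghost m (fun i => c ^+ (p ^ i) * g i).
Proof.
move=> [x xg]; exists (fun j => c ^+ (p ^ j) * x j) => i im.
rewrite -xg // /ghostn mulr_sumr; apply: eq_bigr => j _.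
have ji : (j <= i)%N by rewrite -ltnS.
by rewrite exprMn -exprM -expnD subnKC //; ring.
Qed.

Lemma is_ghost_verschg m g : is_ghost m g -> is_ghost m.+1 (verschg g).
Proof.
move=> [x xg]; exists (fun j => if j is j'.+1 then x j' else 0) => -[|i] im.
  by rewrite /ghostn big_ord1 /= expr0pn mulr0.
rewrite /= -xg // /ghostn big_ord_recl /= expr0pn mulr0 add0r mulr_sumr.
by apply: eq_bigr => j _; rewrite /bump /= add1n exprS mulrA.
Qed.

Lemma is_ghost_behead m g : is_ghost m.+1 g -> exists g', is_ghost m g' /\
  forall i, (i < m)%N -> g i.+1 = g 0%N ^+ (p ^ i.+1) + P * g' i.
Proof.
move=> [x xg]; exists (ghostn p (fun j => x j.+1)); split; first by exists (fun j => x j.+1).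
move=> i im; rewrite -(xg i.+1) // -(xg 0%N) //.
rewrite /ghostn big_ord_recl big_ord1 /= !expr0 !mul1r subn0 expn0 expr1; congr (_ + _).
by rewrite mulr_sumr; apply: eq_bigr => j _; rewrite /bump /= add1n exprS mulrA.
Qed.

End GhostVectors.

Lemma cong_cancelp (A : comPzRingType) p n (a b : A) :
  (forall x y : A, p%:R * x = p%:R * y -> x = y) ->
  cong (p%:R ^+ n.+1) (p%:R * a) (p%:R * b) -> cong (p%:R ^+ n) a b.
Proof.
move=> pI [c e]; exists c; apply: pI.
by rewrite mulrBr e exprS mulrA.
Qed.

Lemma mpoly_cancelp k p : prime p ->
  forall a b : {mpoly int[k]}, p%:R * a = p%:R * b -> a = b.
Proof.
move=> pP a b; apply: mulfI; rewrite -mpolyC_nat mpolyC_eq0 pnatr_eq0 gtn_eqF //.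
exact: prime_gt0.
Qed.

Lemma cong_addmul (A : comPzRingType) (m a c : A) : cong m (a + m * c) a.
Proof. by exists c; rewrite addrC addKr. Qed.

Lemma frob_defect_poly p K : prime p -> (1 <= K)%N ->
  let X : {mpoly int[2]} := 'X_ord0 in let Y : {mpoly int[2]} := 'X_ord_max in
  exists H : nat -> {mpoly int[2]},
    (forall i, X ^+ (p ^ (K + i)) + Y ^+ (p ^ (K + i)) - (X + Y) ^+ (p ^ (K + i)) = p%:R * H i) /\
    (forall i, cong (p%:R ^+ i.+1) (H i.+1) (frobX p 2 (H i))).
Proof.
move=> pP K1 X Y.
pose D i := X ^+ (p ^ (K + i)) + Y ^+ (p ^ (K + i)) - (X + Y) ^+ (p ^ (K + i)).
have [H DH] : exists H, forall i, D i = p%:R * H i.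
  apply: (functional_choice (fun i c => D i = p%:R * c)) => i.
  have [c e] := cong_frobDX pP (K + i) X Y.
  by exists (- c); rewrite /D -opprB e mulrN.
exists H; split => // i.
apply: cong_dvd (rdvd_exp2l _ (_ : i.+1 <= K + i)%N) _; first lia.
apply: cong_cancelp (mpoly_cancelp pP) _.
have -> : p%:R * frobX p 2 (H i) = frobX p 2 (D i) by rewrite DH rmorphM rmorph_nat.
rewrite -DH /cong.
have -> : D i.+1 - frobX p 2 (D i) =
    (X ^+ p + Y ^+ p) ^+ (p ^ (K + i)) - ((X + Y) ^+ p) ^+ (p ^ (K + i)).
  rewrite /D !rmorphB !rmorphD !rmorphXn rmorphD !frobX_X.
  rewrite -/X -/Y -!exprM -!expnS -addnS.
  by move: (X ^+ _) (Y ^+ _) (_ ^+ (p ^ (K + i.+1))) => u w c; ring.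
apply: (cong_exppn pP (k := 1)) => //.
by rewrite expr1; apply: cong_sym; apply: cong_frobD.
Qed.

Section UniversalGhost.
Variables (S : comNzRingType) (p : nat).
Hypothesis pP : prime p.
Local Notation P := (p%:R : S).
Local Notation is_ghost := (is_ghost p).
Implicit Types (m : nat) (g h : nat -> S).

(* Dwork's lemma in Z[X_0, ..., X_(k-1)], transported by evaluation at v. *)
Lemma is_ghost_mmap k (v : 'I_k -> S) (H : nat -> {mpoly int[k]}) m :
  (forall i, cong (p%:R ^+ i.+1) (H i.+1) (frobX p k (H i))) ->
  is_ghost m (fun i => mmap intr v (H i)).
Proof.
move=> HS; have [x xH] := dwork pP (cong_frobX pP) HS m.
by exists (fun j => mmap intr v (x j)) => i im; rewrite -xH // ghostn_rmorph.
Qed.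

Lemma mmap_ghostnX k (v : 'I_k -> S) (f : nat -> 'I_k) (x : nat -> S) i :
  (forall j, (j <= i)%N -> v (f j) = x j) ->
  mmap intr v (ghostn p (fun j => 'X_(f j)) i) = ghostn p x i.
Proof.
by move=> vx; rewrite ghostn_rmorph; apply: eq_ghostn => j ji /=; rewrite mmapX mmap1U vx.
Qed.

Lemma is_ghost_add m g h : is_ghost m g -> is_ghost m h -> is_ghost m (fun i => g i + h i).
Proof.
move=> [x xg] [y yh].
pose v (j : 'I_(m + m).+1) := if (j < m)%N then x j else y (j - m)%N.
pose X (j : nat) : {mpoly int[(m + m).+1]} := 'X_(inord j).
pose Y (j : nat) : {mpoly int[(m + m).+1]} := 'X_(inord (m + j)).
have := @is_ghost_mmap _ v (fun i => ghostn p X i + ghostn p Y i) m.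
case=> [i|z zH].
  by rewrite !frobX_ghostnS rmorphD; apply: congD; apply: cong_addmul.
exists z => i im; rewrite zH // rmorphD -xg // -yh //; congr (_ + _); apply: mmap_ghostnX => j ji.
  by rewrite /v inordK; [rewrite ifT //; lia | lia].
by rewrite /v inordK; [rewrite ifF ?addKn //; lia | lia].
Qed.

Lemma is_ghost_opp m g : is_ghost m g -> is_ghost m (fun i => - g i).
Proof.
move=> [x xg].
pose X (j : nat) : {mpoly int[m.+1]} := 'X_(inord j).
have := @is_ghost_mmap _ (fun j => x j) (fun i => - ghostn p X i) m.
case=> [i|z zH].
  rewrite !frobX_ghostnS rmorphN opprD -mulrN; apply: cong_addmul.
exists z => i im; rewrite zH // rmorphN -xg //; congr (- _); apply: mmap_ghostnX => j ji.
by rewrite inordK //; lia.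
Qed.

Lemma is_ghost_sub m g h : is_ghost m g -> is_ghost m h -> is_ghost m (fun i => g i - h i).
Proof. by move=> gG hG; apply: is_ghost_add gG (is_ghost_opp hG). Qed.

Lemma is_ghost_nat m n : is_ghost m (fun _ => n%:R : S).
Proof.
elim: n => [|n IH]; first exact: is_ghost0.
apply: eq_is_ghost (is_ghost_add IH (is_ghost_teich pP m 1)) => i _.
by rewrite expr1n mulrSr.
Qed.

Lemma is_ghost_frob_defect m K (a b : S) : (1 <= K)%N -> exists h, is_ghost m h /\
  forall i, (i < m)%N ->
    P * h i = a ^+ (p ^ (K + i)) + b ^+ (p ^ (K + i)) - (a + b) ^+ (p ^ (K + i)).
Proof.
move=> K1; have [H [DH HS]] := frob_defect_poly pP K1.
have [z zH] := @is_ghost_mmap _ (fun j => if j == ord0 then a else b) H m HS.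
exists (ghostn p z); split => [|i im]; first by exists z.
have := congr1 (mmap intr (fun j => if j == ord0 then a else b)) (DH i).
by rewrite zH // rmorphM rmorph_nat !rmorphB !rmorphD !rmorphXn /= mmapD !mmapX !mmap1U => <-.
Qed.

End UniversalGhost.

Definition congW (S : comNzRingType) p m (g h : nat -> S) :=
  exists u, is_ghost p m u /\ forall i, (i < m)%N -> g i - h i = p%:R * u i.

Section GhostCongruence.
Variables (S : comNzRingType) (p : nat).
Hypothesis pP : prime p.
Local Notation congW := (congW p).
Implicit Types (m : nat) (g h : nat -> S).

Lemma eq_congW m g h : (forall i, (i < m)%N -> g i = h i) -> congW m g h.
Proof.
move=> gh; exists (fun _ => 0); split; first exact: is_ghost0.
by move=> i im; rewrite gh // subrr mulr0.
Qed.

Lemma congW_refl m g : congW m g g. Proof. exact: eq_congW. Qed.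

Lemma congW_sym m g h : congW m g h -> congW m h g.
Proof.
move=> [u [uG e]]; exists (fun i => - u i); split; first exact: is_ghost_opp.
by move=> i im; rewrite mulrN -e // opprB.
Qed.

Lemma congW_trans m g h (l : nat -> S) : congW m g h -> congW m h l -> congW m g l.
Proof.
move=> [u [uG e]] [v [vG f]]; exists (fun i => u i + v i); split; first exact: is_ghost_add.
by move=> i im; rewrite mulrDr -e // -f // addrA subrK.
Qed.

Lemma congWD m g h (g' h' : nat -> S) : congW m g h -> congW m g' h' ->
  congW m (fun i => g i + g' i) (fun i => h i + h' i).
Proof.
move=> [u [uG e]] [v [vG f]]; exists (fun i => u i + v i); split; first exact: is_ghost_add.
by move=> i im; rewrite mulrDr -e // -f // opprD addrACA.
Qed.

Lemma congWN m g h : congW m g h -> congW m (fun i => - g i) (fun i => - h i).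
Proof.
move=> [u [uG e]]; exists (fun i => - u i); split; first exact: is_ghost_opp.
by move=> i im; rewrite mulrN -e // opprD.
Qed.

Lemma congW_multeich m c g h : congW m g h ->
  congW m (fun i => c ^+ (p ^ i) * g i) (fun i => c ^+ (p ^ i) * h i).
Proof.
move=> [u [uG e]]; exists (fun i => c ^+ (p ^ i) * u i); split; first exact: is_ghost_multeich.
by move=> i im; rewrite -mulrBr e // mulrCA.
Qed.

Lemma congW_ext m g (g' : nat -> S) h (h' : nat -> S) : (forall i, (i < m)%N -> g i = g' i) ->
  (forall i, (i < m)%N -> h i = h' i) -> congW m g h -> congW m g' h'.
Proof. by move=> gg' hh' [u [uG e]]; exists u; split => // i im; rewrite -gg' // -hh' // e. Qed.

Lemma congW_subr0 m g h : congW m g h -> congW m (fun i => g i - h i) (fun _ => 0).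
Proof. by move=> [u [uG e]]; exists u; split => // i im; rewrite subr0 e. Qed.

End GhostCongruence.

(* [vsum p k t] is the ghost vector of sum_j V^j [t_j ^ (p ^ (j + k))]; for
   k = 1 this is sum_j t_j . V^j(1) for the R/p-module structure of Q_{R,n}. *)
Definition vsum (S : comNzRingType) p k (t : nat -> S) (i : nat) : S :=
  \sum_(j < i.+1) p%:R ^+ j * t j ^+ (p ^ (i + k)).

Section VSum.
Variables (S : comNzRingType) (p : nat).
Hypothesis pP : prime p.
Local Notation P := (p%:R : S).
Local Notation congW := (congW p).
Local Notation vsum := (vsum p).
Implicit Types (t s : nat -> S).

Lemma vsum0 k t : vsum k t 0 = t 0%N ^+ (p ^ k).
Proof. by rewrite /vsum big_ord1 /= expr0 mul1r add0n. Qed.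

Lemma vsumS k t i : vsum k t i.+1 = t 0%N ^+ (p ^ (k + i.+1)) + P * vsum k.+1 (fun j => t j.+1) i.
Proof.
rewrite /vsum big_ord_recl /= expr0 mul1r; congr (_ + _); first by rewrite addnC.
rewrite mulr_sumr; apply: eq_bigr => j _.
by rewrite /bump /= add1n exprS -mulrA addnS addSn.
Qed.

Lemma vsum_single k c i : vsum 1 (fun j => if j == k then c else 0) i =
  if (k <= i)%N then P ^+ k * c ^+ (p ^ i.+1) else 0.
Proof.
rewrite /vsum
  (@big_ord_single _ i k (fun j => P ^+ j * (if j == k then c else 0) ^+ (p ^ (i + 1)))).
  by rewrite eqxx addn1.
by move=> j /negbTE ->; rewrite expr0pn // mulr0.
Qed.

Lemma vsum_frob k t i : vsum k.+1 t i = vsum k (fun j => t j ^+ p) i.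
Proof. by apply: eq_bigr => j _; rewrite -exprM -expnS addnS. Qed.

Lemma vsum_multeich a t i : (a ^+ p) ^+ (p ^ i) * vsum 1 t i = vsum 1 (fun j => a * t j) i.
Proof.
by rewrite mulr_sumr; apply: eq_bigr => j _; rewrite exprMn -exprM -expnS addn1 mulrCA.
Qed.

Lemma vsumD m k t s : (1 <= k)%N ->
  congW m (fun i => vsum k t i + vsum k s i) (vsum k (fun j => t j + s j)).
Proof.
elim: m k t s => [|m IH] k t s k1; first by exists (fun _ => 0); split; [apply: is_ghost0|].
have [h [hG hE]] := is_ghost_frob_defect pP m.+1 (t 0%N) (s 0%N) k1.
have [u [uG uE]] := IH k.+1 (fun j => t j.+1) (fun j => s j.+1) (leqW k1).
exists (fun i => h i + verschg p u i); split; first exact/is_ghost_add/is_ghost_verschg.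
case=> [|i] im; first by rewrite !vsum0 /verschg addr0 hE // addn0.
by rewrite !vsumS /verschg mulrDr hE // -uE //; ring.
Qed.

Lemma vsumB m k t s : (1 <= k)%N ->
  congW m (fun i => vsum k t i - vsum k s i) (vsum k (fun j => t j - s j)).
Proof.
move=> k1; apply: (congW_sym pP).
have := congWD pP (vsumD m (fun j => t j - s j) s k1)
  (congWN pP (congW_refl pP m (vsum k s))).
apply: congW_ext => i _; first by rewrite addrK.
by congr (_ - _); apply: eq_bigr => j _; rewrite subrK.
Qed.

End VSum.

Section Decomposition.
Variables (S : comNzRingType) (p : nat).
Hypothesis pP : prime p.
Local Notation P := (p%:R : S).
Hypothesis mulpI : forall x y : S, P * x = P * y -> x = y.
Hypothesis frob_surj : forall a : S, exists b c, a = b ^+ p + P * c.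
Local Notation is_ghost := (is_ghost p).
Local Notation congW := (congW p).
Local Notation vsum := (vsum p).

Lemma frobn_surj k (a : S) : exists b c, a = b ^+ (p ^ k) + P * c.
Proof.
elim: k a => [|k IH] a; first by exists a, 0; rewrite expn0 expr1 mulr0 addr0.
have [b [c ->]] := IH a; have [b' [c' bE]] := frob_surj b.
have [d dE] : cong P (b ^+ (p ^ k)) ((b' ^+ p) ^+ (p ^ k)).
  by apply: congX; rewrite bE; apply: cong_addmul.
exists b', (d + c); rewrite expnS exprM -[b ^+ _](subrK ((b' ^+ p) ^+ (p ^ k))) dE.
by rewrite exprAC; ring.
Qed.

(* The Witt vector kappa with V kappa = p - [p], so that its ghost
   components are (p - p ^ (p ^ (i + 1))) / p. *)
Definition kappa i : S := 1 - P ^+ (p ^ i.+1 - 1).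

Lemma mulp_exprpS i : P * P ^+ (p ^ i.+1 - 1) = P ^+ (p ^ i.+1).
Proof. by rewrite -exprS subn1 prednK // expn_gt0 prime_gt0. Qed.

Lemma is_ghost_kappa m : is_ghost m kappa.
Proof.
have : is_ghost m.+1 (fun i => P - P ^+ (p ^ i)).
  exact: (is_ghost_sub pP (is_ghost_nat S pP m.+1 p) (is_ghost_teich pP m.+1 P)).
case/is_ghost_behead=> g [gG gE]; apply: eq_is_ghost gG => i im; apply: mulpI.
have := gE i im; rewrite expn0 expr1 subrr expr0pn // add0r => <-.
by rewrite /kappa mulrBr mulr1 mulp_exprpS.
Qed.

Lemma exprpS_mulp (d : S) i :
  (P * d) ^+ (p ^ i.+1) = P * d ^+ (p ^ i.+1) - P * ((d ^+ p) ^+ (p ^ i) * kappa i).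
Proof. by rewrite -exprM -expnS /kappa exprMn -mulp_exprpS; ring. Qed.

Lemma vsum_decomposition m k (g : nat -> S) : is_ghost m g -> exists t, congW m g (vsum k t).
Proof.
elim: m k g => [|m IH] k g gG.
  by exists (fun _ => 0), (fun _ => 0); split; [apply: is_ghost0|].
have [t0 [d g0E]] := frobn_surj k (g 0%N).
have : is_ghost m.+1 (fun i => g i - (t0 ^+ (p ^ k)) ^+ (p ^ i)).
  exact: (is_ghost_sub pP gG (is_ghost_teich pP _ _)).
case/is_ghost_behead=> [y [yG yE]].
have [s [w [wG wE]]] := IH k.+1 (fun i => y i - (d ^+ p) ^+ (p ^ i) * kappa i)
  (is_ghost_sub pP yG (is_ghost_multeich _ (is_ghost_kappa m))).
exists (fun j => if j is j'.+1 then s j' else t0), (fun i => d ^+ (p ^ i) + verschg p w i).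
split; first exact: (is_ghost_add pP (is_ghost_teich pP _ _) (is_ghost_verschg pP wG)).
case=> [|i] im; first by rewrite vsum0 /= /verschg expn0 expr1 addr0 g0E; ring.
have d0 : g 0%N - t0 ^+ (p ^ k) = P * d by rewrite g0E addrAC subrr add0r.
have := yE i im; rewrite expn0 expr1 d0 exprpS_mulp -exprM -expnD => giE.
rewrite vsumS /= /verschg -(wE i im).
have -> : g i.+1 = t0 ^+ (p ^ (k + i.+1)) + (P * d ^+ (p ^ i.+1) -
  P * ((d ^+ p) ^+ (p ^ i) * kappa i) + P * y i) by rewrite -giE; ring.
ring.
Qed.

End Decomposition.

Section VSumKernel.
Variables (S : comNzRingType) (p : nat) (pi1 : S).
Hypothesis pP : prime p.
Local Notation P := (p%:R : S).
Hypothesis mulpI : forall x y : S, P * x = P * y -> x = y.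
Hypothesis pi1X : pi1 ^+ p = P.
Hypothesis frob_inj : forall b : S, rdvd P (b ^+ p) -> rdvd pi1 b.
Local Notation congW := (congW p).
Local Notation vsum := (vsum p).

Lemma vsum_kernel_behead m (t e : nat -> S) :
  congW m (kappa S p) (vsum 1 e) -> congW m.+1 (vsum 1 t) (fun _ => 0) ->
  exists tau, t 0%N = pi1 * tau /\
    congW m (vsum 1 (fun j => t j.+1 ^+ p - tau ^+ p * e j)) (fun _ => 0).
Proof.
move=> eE [u [uG uE]].
have := uE 0%N isT; rewrite vsum0 subr0 expn1 => t0E.
have [tau tauE] := frob_inj (ex_intro _ (u 0%N) t0E).
have u0E : u 0%N = tau ^+ p by apply: mulpI; rewrite -t0E tauE exprMn pi1X.
exists tau; split => //.
have [u' [u'G u'E]] := is_ghost_behead uG.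
pose X i := ((tau ^+ p) ^+ p) ^+ (p ^ i).
have : congW m (vsum 1 (fun j => t j.+1 ^+ p)) (fun i => X i * kappa S p i).
  exists u'; split => // i im; apply: mulpI.
  have := uE i.+1 im; rewrite vsumS subr0 vsum_frob u'E // u0E tauE.
  have -> : (tau ^+ p) ^+ (p ^ i.+1) = X i by rewrite /X expnS exprM.
  have -> : (pi1 * tau) ^+ (p ^ (1 + i.+1)) = P * (P ^+ (p ^ i.+1 - 1) * X i).
    by rewrite mulrA mulp_exprpS // exprMn add1n /X !expnS !exprM pi1X.
  set V := vsum 1 _ i => E.
  have -> : P * (V - X i * kappa S p i) = P * (P ^+ (p ^ i.+1 - 1) * X i) + P * V - P * X i.
    by rewrite /kappa; ring.
  by rewrite E; ring.
move=> /(congW_trans pP) tX.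
have Xe : congW m (fun i => X i * kappa S p i) (vsum 1 (fun j => tau ^+ p * e j)).
  by apply: congW_ext (congW_multeich ((tau ^+ p) ^+ p) eE) => // i _; apply: vsum_multeich.
exact: (congW_trans pP (congW_sym pP (vsumB pP _ _ _ (leqnn 1))) (congW_subr0 (tX _ Xe))).
Qed.

End VSumKernel.

Section UnitsModp.
Variables (A : comPzRingType) (p : nat).
Hypothesis pP : prime p.
Local Notation P := (p%:R : A).
Implicit Types a b v : A.

Lemma unit_mod1 : unit_mod p (1 : A).
Proof. by exists 1; rewrite mulr1; apply: cong_refl. Qed.

Lemma unit_modN a : unit_mod p a -> unit_mod p (- a).
Proof. by move=> [z az]; exists (- z); rewrite mulrNN. Qed.

Lemma unit_modM a b : unit_mod p a -> unit_mod p b -> unit_mod p (a * b).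
Proof.
move=> [z az] [y bY]; exists (z * y); rewrite mulrACA.
by apply: cong_trans (congM az bY) _; rewrite mulr1; apply: cong_refl.
Qed.

Lemma unit_mod_frob_root v b : unit_mod p v -> cong P (b ^+ p) v -> unit_mod p b.
Proof.
move=> [z vz] bv; exists (b ^+ p.-1 * z); rewrite mulrA -exprS prednK ?prime_gt0 //.
exact: cong_trans (congM bv (cong_refl _ z)) vz.
Qed.

End UnitsModp.

Section Perfectoid.
Variables (S : comNzRingType) (p : nat) (pi : nat -> S).
Hypothesis pP : prime p.
Local Notation P := (p%:R : S).
Hypothesis ptf : ptorsion_free S p.
Hypothesis pi0 : pi 0%N = P.
Hypothesis piS : forall e, pi e.+1 ^+ p = pi e.
Hypothesis frob_inj : forall b : S, rdvd P (b ^+ p) -> rdvd (pi 1%N) b.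
Hypothesis frob_surj : forall a : S, exists b, cong P (b ^+ p) a.
Local Notation p_i := (p_i p pi).

Lemma mulpI (x y : S) : P * x = P * y -> x = y.
Proof. by move=> e; apply/eqP; rewrite -subr_eq0; apply/eqP/ptf; rewrite mulrBr e subrr. Qed.

Lemma pi_exprn a b : pi (a + b) ^+ (p ^ b) = pi a.
Proof. by elim: b => [|b IH]; rewrite ?addn0 ?expn0 ?expr1 // addnS expnS exprM piS. Qed.

Lemma pi_exprpn e : pi e ^+ (p ^ e) = P.
Proof. by rewrite -pi0 -(pi_exprn 0 e) add0n. Qed.

Lemma mulpX0 k (z : S) : P ^+ k * z = 0 -> z = 0.
Proof. by elim: k z => [|k IH] z; rewrite ?expr0 ?mul1r // exprSr -mulrA => /IH/ptf. Qed.

Lemma mulpiXI e k (x y : S) : pi e ^+ k * x = pi e ^+ k * y -> x = y.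
Proof.
move=> e1; apply/eqP; rewrite -subr_eq0; apply/eqP/(@mulpX0 k).
have kk : (k <= p ^ e * k)%N by rewrite leq_pmull // expn_gt0 prime_gt0.
by rewrite -(pi_exprpn e) -exprM -(subnK kk) exprD -mulrA mulrBr e1 subrr mulr0.
Qed.

Lemma frob_root_rdvd e k (b : S) : (k <= p ^ e)%N ->
  rdvd (pi e ^+ k) (b ^+ p) -> rdvd (pi e.+1 ^+ k) b.
Proof.
move=> kpe [c bc]; set z := b * pi e.+1 ^+ (p ^ e - k).
have [y zy] : rdvd (pi 1%N) z.
  apply: frob_inj; exists c.
  by rewrite /z exprMn -exprM mulnC exprM piS bc mulrAC -exprD subnKC // pi_exprpn.
exists y; apply: (@mulpiXI e.+1 (p ^ e - k)).
by rewrite mulrC -/z zy -(pi_exprn 1 e) add1n mulrA -exprD subnK // mulrC.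
Qed.

Definition psum j := (\sum_(k < j) p ^ k)%N.

Lemma psumS j : psum j.+1 = (psum j + p ^ j)%N.
Proof. by rewrite /psum big_ord_recr. Qed.

Lemma psum_lt j : (psum j < p ^ j)%N.
Proof.
elim: j => [|j IH]; first by rewrite /psum big_ord0.
by rewrite psumS expnS; have := prime_gt1 pP; nia.
Qed.

Lemma p_i0 : p_i 0 = 1. Proof. by rewrite /p_i big_ord0 expr0. Qed.

(* p ^ (i_j / p) *)
Definition p_i_root j := pi j.+1 ^+ psum j.

Lemma p_i_rootX j : p_i_root j ^+ p = p_i j.
Proof. by rewrite /p_i_root -exprM mulnC exprM piS. Qed.

Lemma p_iS j : p_i j.+1 = pi 1%N * p_i_root j.
Proof. by rewrite /p_i -/(psum _) psumS exprD mulrC -(pi_exprn 1 j) add1n. Qed.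

Lemma rdvd_p_i_p m : rdvd (p_i m) P.
Proof.
rewrite /p_i -/(psum m) -(pi_exprpn m) -(subnKC (ltnW (psum_lt m))) exprD.
by exists (pi m ^+ (p ^ m - psum m)).
Qed.

Lemma rdvd_pi1_p_i j : (1 <= j)%N -> rdvd (pi 1%N) (p_i j).
Proof. by case: j => // j _; rewrite p_iS; exists (p_i_root j). Qed.

Lemma pi1X : pi 1%N ^+ p = P. Proof. by rewrite piS pi0. Qed.

Lemma frob_surj_add (a : S) : exists b c, a = b ^+ p + P * c.
Proof. by have [b [c bc]] := frob_surj a; exists b, (- c); rewrite mulrN -bc; ring. Qed.

Lemma unit_mod_pi1 (u : S) : rdvd (pi 1%N) (u - 1) -> unit_mod p u.
Proof.
move=> [a ua]; exists (\sum_(i < p) (1 - u) ^+ i).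
have -> : u * \sum_(i < p) (1 - u) ^+ i = 1 - (1 - u) ^+ p.
  rewrite -[X in _ = X - _](expr1n _ p) subrXX.
  have -> : 1 - (1 - u) = u by rewrite opprB addrC subrK.
  by congr (_ * _); apply: eq_bigr => i _; rewrite expr1n mul1r.
by rewrite -[1 - u]opprB ua exprNn exprMn pi1X; exists (- ((-1) ^+ p * a ^+ p)); ring.
Qed.

Local Notation congW := (congW p).
Local Notation vsum := (vsum p).
Local Notation kappa := (kappa S p).

(* [psi_sum w t m] is the value on sum_j t_j . V^j(1) of the map sending V^j(1)
   to w_j p^(i_j); [psi_respects m w] says that it factors through Q_{R,m}. *)
Definition psi_sum (w t : nat -> S) m : S := \sum_(j < m) w j * p_i j * t j.

Definition psi_respects m (w : nat -> S) :=
  forall t, congW m (vsum 1 t) (fun _ => 0) -> rdvd (p_i m) (psi_sum w t m).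

Lemma psi_sumD w t s m :
  psi_sum w (fun j => t j + s j) m = psi_sum w t m + psi_sum w s m.
Proof. by rewrite /psi_sum -big_split; apply: eq_bigr => j _; rewrite mulrDr. Qed.

Lemma psi_sumZ w a t m : psi_sum w (fun j => a * t j) m = a * psi_sum w t m.
Proof. by rewrite /psi_sum mulr_sumr; apply: eq_bigr => j _; rewrite mulrCA. Qed.

Lemma psi_sumB w t s m :
  psi_sum w (fun j => t j - s j) m = psi_sum w t m - psi_sum w s m.
Proof. by rewrite /psi_sum -sumrB; apply: eq_bigr => j _; rewrite mulrBr. Qed.

Lemma psi_respects1 : psi_respects 1 (fun _ => 1).
Proof.
move=> t [u [_ uE]]; have := uE 0%N isT; rewrite vsum0 subr0 expn1 => t0E.
have [c tc] := frob_inj (ex_intro _ (u 0%N) t0E).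
by rewrite /psi_sum big_ord1 p_i0 !mul1r /p_i big_ord1 expn0 expr1; exists c.
Qed.

Lemma psi_sum_kappa m w e : (1 <= m)%N -> w 0%N = 1 ->
  congW m kappa (vsum 1 e) -> rdvd (pi 1%N) (psi_sum w e m - 1).
Proof.
move=> m1 w0 [v [_ vE]].
have e0p : rdvd P (e 0%N ^+ p - 1).
  have p1 : (0 < p - 1)%N by rewrite subn_gt0 prime_gt1.
  have := vE 0%N m1; rewrite vsum0 /kappa expn1 -(prednK p1) exprS => E.
  by exists (- v 0%N - P ^+ (p - 1).-1); rewrite mulrBr mulrN -E; ring.
have : rdvd P ((e 0%N - 1) ^+ p).
  apply: rdvd_cong e0p; rewrite -[1 in X in cong _ _ X](expr1n _ p).
  exact: cong_trans (cong_frobD pP _ _) (congD (cong_refl _ _) (cong_frobN pP _)).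
case/frob_inj => c cE.
case: m m1 {vE} => // m _; rewrite /psi_sum big_ord_recl /= w0 p_i0 !mul1r addrAC.
apply: rdvdD; first by exists c.
by apply: rdvd_sum => j; apply/rdvdMr/rdvdMl/rdvd_pi1_p_i.
Qed.

Lemma psi_respects_extend m (w e B : nat -> S) c :
  psi_respects m w -> congW m kappa (vsum 1 e) -> cong P (psi_sum w e m * c) 1 ->
  (forall j, cong P (B j ^+ p) (- c * w j)) ->
  psi_respects m.+1 (fun j => if j is j'.+1 then B j' else 1).
Proof.
move=> wR eE uc BE t tK.
have [tau [t0E tauK]] := vsum_kernel_behead pP mulpI pi1X frob_inj eE tK.
set u := psi_sum w e m; set Z := psi_sum w (fun j => t j.+1 ^+ p) m.
have ZE : rdvd (p_i m) (Z - tau ^+ p * u) by rewrite -psi_sumZ -psi_sumB; apply: wR.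
set T := \sum_(j < m) B j * p_i_root j * t j.+1.
have psiE : psi_sum (fun j => if j is j'.+1 then B j' else 1) t m.+1 = pi 1%N * (tau + T).
  rewrite /psi_sum big_ord_recl /= p_i0 t0E mulrDr !mul1r; congr (_ + _).
  by rewrite /T mulr_sumr; apply: eq_bigr => j _; rewrite /bump /= add0n p_iS; ring.
have frobT : cong P ((tau + T) ^+ p) (tau ^+ p - c * Z).
  apply: cong_trans (cong_frobD pP _ _) (congD (cong_refl _ _) _).
  apply: cong_trans (cong_frob_sum pP _) _.
  rewrite /Z /psi_sum mulr_sumr -sumrN; apply: cong_sum => j.
  have -> : - (c * (w j * p_i j * t j.+1 ^+ p)) = - c * w j * p_i j * t j.+1 ^+ p by ring.
  by rewrite !exprMn p_i_rootX; apply: congM (congM (BE j) (cong_refl _ _)) (cong_refl _ _).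
have : rdvd (p_i m) ((tau + T) ^+ p).
  have -> : (tau + T) ^+ p = ((tau + T) ^+ p - (tau ^+ p - c * Z)) -
      tau ^+ p * (u * c - 1) - c * (Z - tau ^+ p * u) by ring.
  apply: rdvdB; first apply: rdvdB; last exact: rdvdMl.
  - exact: rdvd_trans (rdvd_p_i_p _) frobT.
  - exact/rdvdMl/(rdvd_trans (rdvd_p_i_p _) uc).
move/(frob_root_rdvd (ltnW (psum_lt m))) => rootT.
by rewrite psiE p_iS; apply: rdvd_mul (rdvd_refl _) rootT.
Qed.

Lemma psi_respectsS m w : (1 <= m)%N -> w 0%N = 1 -> (forall j, unit_mod p (w j)) ->
  psi_respects m w ->
  exists w', [/\ w' 0%N = 1, forall j, unit_mod p (w' j) & psi_respects m.+1 w'].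
Proof.
move=> m1 w0 wU wR.
have [e eE] := vsum_decomposition pP mulpI frob_surj_add 1 (is_ghost_kappa pP mulpI m).
have [c uc] := unit_mod_pi1 (psi_sum_kappa m1 w0 eE).
have [B BE] : exists B, forall j, cong P (B j ^+ p) (- c * w j).
  exact: (functional_choice (fun j b => cong P (b ^+ p) (- c * w j))).
exists (fun j => if j is j'.+1 then B j' else 1).
split => //; last exact: psi_respects_extend wR eE uc BE.
case=> [|j]; first exact: unit_mod1.
apply: (unit_mod_frob_root pP _ (BE j)); apply: unit_modM (wU j); apply: unit_modN.
by exists (psi_sum w e m); rewrite mulrC.
Qed.

Lemma psi_respects_exists m : (1 <= m)%N ->
  exists w, [/\ w 0%N = 1, forall j, unit_mod p (w j) & psi_respects m w].
Proof.
elim: m => // -[_ _|m IH _].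
  by exists (fun _ => 1); split => // [_|]; [exact: unit_mod1 | exact: psi_respects1].
by have [w [w0 wU wR]] := IH isT; apply: psi_respectsS wR.
Qed.

Lemma psi_sum_single w k b m : (k < m)%N ->
  psi_sum w (fun j => if j == k then b else 0) m = w k * p_i k * b.
Proof.
move=> km; rewrite /psi_sum (bigD1 (Ordinal km)) //= eqxx big1 ?addr0 // => j jk.
by rewrite ifN ?mulr0 //; apply: contra jk => /eqP jk; apply/eqP/val_inj.
Qed.

Section PsiMap.
Variables (n : nat) (w : nat -> S) (dec : ('I_n.+1 -> S) -> nat -> S).
Hypothesis w0 : w 0%N = 1.
Hypothesis wR : psi_respects n.+1 w.
Hypothesis decE : forall x, congW n.+1 (ghostn p (fun j => x (inord j))) (vsum 1 (dec x)).
Local Notation m := n.+1.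

Definition psi (x : 'I_m -> S) : S := psi_sum w (dec x) m.

Lemma psi_sum_cong t s :
  congW m (vsum 1 t) (vsum 1 s) -> cong (p_i m) (psi_sum w t m) (psi_sum w s m).
Proof.
move=> /congW_subr0 ts; rewrite /cong -psi_sumB; apply: wR.
exact: (congW_trans pP (congW_sym pP (vsumB pP _ _ _ (leqnn 1))) ts).
Qed.

Lemma psiE x t : congW m (ghostn p (fun j => x (inord j))) (vsum 1 t) ->
  cong (p_i m) (psi x) (psi_sum w t m).
Proof. by move=> xt; apply/psi_sum_cong/(congW_trans pP (congW_sym pP (decE x)) xt). Qed.

Lemma psi_additive x y z : (forall i, ghost p z i = ghost p x i + ghost p y i) ->
  cong (p_i m) (psi z) (psi x + psi y).
Proof.
move=> zE; rewrite -psi_sumD; apply: psiE.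
apply: (congW_trans pP _ (vsumD pP _ _ _ (leqnn 1))).
apply: (congW_trans pP _ (congWD pP (decE x) (decE y))).
by apply: (eq_congW pP) => i im; rewrite !ghostn_inord.
Qed.

Lemma psi_pmul x z : (forall i, ghost p z i = P * ghost p x i) -> cong (p_i m) (psi z) 0.
Proof.
move=> zE; have -> : 0 = psi_sum w (fun _ => 0) m by rewrite /psi_sum big1 // => j _; rewrite mulr0.
apply: psiE; exists (ghostn p (fun j => x (inord j))).
split; first by exists (fun j => x (inord j)).
move=> i im; rewrite !ghostn_inord // zE.
by rewrite /vsum big1 ?subr0 // => j _; rewrite expr0pn // mulr0.
Qed.

Lemma psi_scale a x z : (forall i, ghost p z i = ghost p (teich m (a ^+ p)) i * ghost p x i) ->
  cong (p_i m) (psi z) (a * psi x).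
Proof.
move=> zE; rewrite /psi -psi_sumZ; apply: psiE.
have zx : congW m (ghostn p (fun j => z (inord j)))
    (fun i => (a ^+ p) ^+ (p ^ i) * ghostn p (fun j => x (inord j)) i).
  by apply: (eq_congW pP) => i im; rewrite !ghostn_inord // zE -ghostn_inord ?ghostn_teich.
apply: (congW_trans pP zx); apply: congW_ext (congW_multeich (a ^+ p) (decE x)) => // i _.
exact: vsum_multeich.
Qed.

Lemma psi_teich1 : cong (p_i m) (psi (teich m 1)) 1.
Proof.
suff : cong (p_i m) (psi (teich m 1)) (psi_sum w (fun j => if j == 0%N then 1 else 0) m).
  by rewrite psi_sum_single // w0 p_i0 !mulr1.
apply: psiE; apply: (eq_congW pP) => i im.
by rewrite vsum_single // ghostn_teich // !expr1n expr0 mulr1.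
Qed.

Lemma psi_versch a b : cong P (b ^+ (p ^ m)) a ->
  cong (p_i m) (psi (verschV m a)) (w n * p_i n * b).
Proof.
move=> [c bc]; rewrite -(@psi_sum_single w n b m (ltnSn n)); apply: psiE.
exists (ghostn p (fun j => if j == n then - c else 0)); split; first by eexists.
move=> i im; rewrite vsum_single // ghostn_single // ghostn_versch //.
have [-> | ni] := eqVneq i n; last by rewrite leqNgt ltn_neqAle ni -ltnS im subrr mulr0.
have -> : a = b ^+ (p ^ m) - P * c by rewrite -bc; ring.
by rewrite leqnn subnn expn0 expr1; ring.
Qed.

Lemma psi_Qlinear : Qlinear p (p_i m) psi.
Proof. by split; [exact: psi_additive | split; [exact: psi_pmul | exact: psi_scale]]. Qed.

End PsiMap.

Lemma psi_exists n : exists (f : ('I_n.+1 -> S) -> S) (w : S),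
  [/\ unit_mod p w, Qlinear p (p_i n.+1) f, cong (p_i n.+1) (f (teich n.+1 1)) 1 &
    forall a b : S, cong P (b ^+ (p ^ n.+1)) a ->
      cong (p_i n.+1) (f (verschV n.+1 a)) (w * p_i n * b)].
Proof.
have [w [w0 wU wR]] := psi_respects_exists (ltn0Sn n).
have [dec decE] : exists dec : ('I_n.+1 -> S) -> nat -> S,
    forall x, congW n.+1 (ghostn p (fun j => x (inord j))) (vsum 1 (dec x)).
  apply: (functional_choice (fun x t => congW n.+1 _ (vsum 1 t))) => x.
  by apply: (vsum_decomposition pP mulpI frob_surj_add); eexists.
exists (psi w dec), (w n); split; first exact: wU.
- exact: psi_Qlinear.
- exact: psi_teich1.
- exact: psi_versch.
Qed.

End Perfectoid.

(* Evaluation of integral polynomials ([mmap]) needs a nontrivial ring. *)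
Section NonZeroAlias.
Variable R : comPzRingType.
Hypothesis R_nz : (1 : R) != 0.
Definition nz_carrier : Type := R.
HB.instance Definition _ := GRing.ComPzRing.on nz_carrier.
HB.instance Definition _ := GRing.PzSemiRing_isNonZero.Build nz_carrier R_nz.
Definition nz_ring : comNzRingType := nz_carrier.
End NonZeroAlias.

Lemma rdvd_zero_ring (R : comPzRingType) (a b : R) : (1 : R) = 0 -> rdvd a b.
Proof. by move=> R0; exists 0; rewrite mulr0 -[b]mul1r R0 mul0r. Qed.

Theorem theorem4p7 (R : comPzRingType) (p : nat) (pi : nat -> R) (n : nat) :
  prime p -> ptorsion_free R p -> compatible_roots p pi ->
  perfectoid_tf p pi -> (1 <= n)%N ->
  exists (f : ('I_n -> R) -> R) (w : R),
    unit_mod p w /\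
    Qlinear p (p_i p pi n) f /\
    cong (p_i p pi n) (f (teich n 1)) 1 /\
    (forall a b : R, cong p%:R (b ^+ (p ^ n)) a ->
       cong (p_i p pi n) (f (verschV n a)) (w * p_i p pi n.-1 * b)).
Proof.
move=> pP ptf [pi0 piS] [_ [frob_surj frob_inj]]; case: n => // n _.
have [R0 | R_nz] := eqVneq (1 : R) 0.
  exists (fun _ => 0), 0; split; first by exists 0; apply: rdvd_zero_ring.
  by do ![split | move=> *]; apply: rdvd_zero_ring.
have [f [w [wU fQ f1 fV]]] := @psi_exists (nz_ring R_nz) p pi pP ptf pi0 piS frob_inj frob_surj n.
by exists f, w.
Qed.
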